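(* Let $\mathcal{A}$ be a subring of the algebraic integers (not necessarily closed under complex conjugation). Let $\{\mathcal{W}_i\}_{i=1}^n$ be an equichordal tight fusion frame consisting of $n$ subspaces of dimension $m$ of $\mathbb{F}^k$ ($\mathbb{F}=\mathbb{R}$ or $\mathbb{C}$), with associated orthogonal projections $\{P_i\}_{i=1}^n$. If for all $i\in[n]$ the entries of $kP_i$ lie in $\mathcal{A}$, then \[ \frac{km(mn-k)}{n-1}\in\mathbb{Z}. \]
   Context: The algebraic integers are the complex roots of monic polynomials with integer coefficients. A collection of $m$-dimensional subspaces $\{\mathcal{W}_i\}_{i=1}^n$ of $\mathbb{F}^k$ with orthogonal projections $P_i$ is a tight fusion frame if $\sum_{i=1}^nP_i=AI_k$ for some $A>0$, and equichordal if $\operatorname{trace}(P_iP_j)$ is the same for all $i\neq j$. *)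

From mathcomp Require Import all_boot all_order all_algebra.
From mathcomp Require Import algC algnum.
Set Implicit Arguments. Unset Strict Implicit. Unset Printing Implicit Defensive.
Import Order.TTheory GRing.Theory Num.Theory.
Local Open Scope ring_scope.

Definition adjmx (k : nat) (A : 'M[algC]_k) : 'M[algC]_k := map_mx Num.conj A^T.

Definition is_orth_proj (k m : nat) (P : 'M[algC]_k) : Prop :=
  P *m P = P /\ adjmx P = P /\ \rank P = m.

Definition tight_fusion_frame (n k : nat) (P : 'I_n -> 'M[algC]_k) : Prop :=
  exists A : algC, 0 < A /\ \sum_(i < n) P i = A%:M.

Definition equichordal (n k : nat) (P : 'I_n -> 'M[algC]_k) : Prop :=
  exists c : algC, forall i j : 'I_n, i != j -> \tr (P i *m P j) = c.

(* The trace of an orthogonal projection is its rank, so taking traces in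
   sum_i P_i = A I gives n m = A k, and multiplying by P_i first gives
   m + (n - 1) c = A m, where c is the common value of tr(P_i P_j).
   Eliminating A yields (n - 1) k^2 c = k m (m n - k).  For n >= 2 the
   quantity k m (m n - k) / (n - 1) is thus k^2 c = tr((k P_i)(k P_j)), which
   lies in the given subring, so it is a rational algebraic integer, i.e. an integer;
   the cases n = 0 and n = 1 (where the division is by 0) are direct. *)
From mathcomp Require Import all_boot all_order all_algebra.
From mathcomp Require Import algC algnum.
From mathcomp Require Import ring.
Set Implicit Arguments. Unset Strict Implicit. Unset Printing Implicit Defensive.
Import Order.TTheory GRing.Theory Num.Theory.
Local Open Scope ring_scope.

Lemma mxtrace_idem (F : fieldType) k (A : 'M[F]_k) :
  A *m A = A -> \tr A = (\rank A)%:R.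
Proof.
move=> AA.
have base_inv : row_base A *m col_base A = 1%:M.
  apply: (row_full_inj (col_base_full A)); apply: (row_free_inj (row_base_free A)).
  have := AA; rewrite -{1 2 3}(mulmx_base A) !mulmxA => ->.
  by rewrite mulmx1.
by rewrite -{1}(mulmx_base A) mxtrace_mulC base_inv mxtrace1.
Qed.

Lemma mxtrace_mul_closed (R : pzSemiRingType) (S : {pred R}) k (A B : 'M[R]_k) :
  semiring_closed S -> (forall i j, A i j \in S) -> (forall i j, B i j \in S) ->
  \tr (A *m B) \in S.
Proof.
move=> [[S0 SD] [_ SM]] AS BS.
apply: (big_ind (fun x => x \in S)) => // i _; rewrite mxE.
by apply: (big_ind (fun x => x \in S)) => // j _; apply: SM.
Qed.

Section TightEquichordal.

Variables (F : fieldType) (n k m : nat) (P : 'I_n -> 'M[F]_k) (A c : F).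
Hypothesis P_idem : forall i, P i *m P i = P i.
Hypothesis P_rank : forall i, \rank (P i) = m.
Hypothesis sumP : \sum_i P i = A%:M.
Hypothesis trPP : forall i j, i != j -> \tr (P i *m P j) = c.

Let trP i : \tr (P i) = m%:R.
Proof. by rewrite mxtrace_idem ?P_rank. Qed.

Lemma tight_frame_trace : n%:R * m%:R = A * k%:R.
Proof.
have := congr1 mxtrace sumP.
rewrite mxtrace_scalar raddf_sum (eq_bigr _ (fun i _ => trP i)) sumr_const card_ord.
by rewrite mulr_natl mulr_natr.
Qed.

Lemma tight_frame_trace_mul (i : 'I_n) : m%:R + (n%:R - 1) * c = A * m%:R.
Proof.
have := congr1 (fun M => \tr (P i *m M)) sumP.
rewrite /= mul_mx_scalar mxtraceZ trP mulmx_sumr raddf_sum (bigD1 i) //= P_idem trP.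
rewrite (eq_bigr (fun _ => c)) => [|j ji]; last by rewrite trPP // eq_sym.
have n_gt0 : (0 < n)%N := leq_ltn_trans (leq0n i) (ltn_ord i).
by rewrite sumr_const cardC1 card_ord -(mulr_natl c) -subn1 natrB // => <-.
Qed.

Lemma equichordal_constant (i : 'I_n) :
  (n%:R - 1) * (k%:R ^+ 2 * c) = k%:R * m%:R * (m%:R * n%:R - k%:R).
Proof.
have eAm : (n%:R - 1) * c = A * m%:R - m%:R.
  by rewrite -(tight_frame_trace_mul i); ring.
have -> : (n%:R - 1) * (k%:R ^+ 2 * c) = k%:R ^+ 2 * ((n%:R - 1) * c) by ring.
by rewrite eAm [m%:R * n%:R]mulrC tight_frame_trace; ring.
Qed.

End TightEquichordal.

Theorem mainTheorem3 (S : {pred algC}) (n m k : nat) (P : 'I_n -> 'M[algC]_k) :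
  subring_closed S ->
  {subset S <= Aint} ->
  (forall i, is_orth_proj m (P i)) ->
  tight_fusion_frame P ->
  equichordal P ->
  (forall i (a b : 'I_k), k%:R * P i a b \in S) ->
  ((k%:R * m%:R * (m%:R * n%:R - k%:R)) / (n%:R - 1) : algC) \in Num.int.
Proof.
move=> Sring SA hP [A [_ sumP]] [c hc] kPS.
have P_idem i : P i *m P i = P i by case: (hP i).
have P_rank i : \rank (P i) = m by case: (hP i) => _ [].
case: n P hP sumP hc kPS P_idem P_rank => [|[|n]] P _ sumP hc kPS P_idem P_rank.
- rewrite (_ : _ / _ = (k * m * k)%:R) ?rpred_nat //.
  by rewrite !natrM mulr0 !sub0r invrN1; ring.
- by rewrite subrr invr0 mulr0 rpred0.
pose i : 'I_n.+2 := ord0; pose j : 'I_n.+2 := ord_max.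
have n1_neq0 : n.+2%:R - 1 != 0 :> algC by rewrite -natr1 addrK pnatr_eq0.
apply: Cint_rat_Aint; first by rewrite !(rpred_div, rpredM, rpredB, rpred_nat, rpred1).
rewrite -(equichordal_constant P_idem P_rank sumP hc i) mulrC mulKf //; apply/SA.
rewrite -(hc i j) // -mxtraceZ expr2 -scalerA scalemxAl scalemxAr.
by apply: mxtrace_mul_closed (GRing.subring_closed_semi Sring) _ _ => a b; rewrite mxE kPS.
Qed.
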